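(* Let $G=(V\cup\{O\},E)$ be a connected, unweighted, undirected graph, where $V$ is a set of $n$ terminals and $O\notin V$ is the depot, and let $k\in[1,n]$ be an integer tour capacity. Let $\mathrm{opt}$ denote the minimum cost of a feasible solution to the graphic CVRP on this instance, and let $\mathrm{rad}=\frac{2}{k}\sum_{v\in V}\mathrm{dist}(v)$. Then \[ \mathrm{opt}\geq \mathrm{rad}+\frac{n}{2}-\frac{n}{2k^2}. \]
   Context: For $v\in V$, $\mathrm{dist}(v)$ is the number of edges on a shortest $v$-to-$O$ path in $G$. A tour is a walk $z_1z_2\dots z_p$ in $G$ with $z_1=z_p=O$ and $(z_i,z_{i+1})\in E$ for all $i\in[1,p-1]$; its cost is $p-1$ (the number of edges traversed, with multiplicity). In the graphic CVRP, each terminal has unit demand; a feasible solution is a set of tours, each starting and ending at $O$, together with an assignment of each terminal to exactly one tour that visits it (the tour ''covers'' its demand), such that each tour covers at most $k$ terminals. The cost of a solution is the total cost of its tours, and the goal is to minimize this cost. *)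

From mathcomp Require Import all_boot all_order all_algebra.
Set Implicit Arguments. Unset Strict Implicit. Unset Printing Implicit Defensive.

Section CVRP.
Variables (T : finType) (e : rel T) (O : T).

Definition simple_graph : Prop := symmetric e /\ irreflexive e.

Definition connected_graph : Prop := forall x y : T, connect e x y.

Definition walk_to_depot (v : T) (m : nat) : bool :=
  [exists p : m.-tuple T, path e v p && (last v p == O)].

(* dist v = number of edges on a shortest v-to-O path: the least m with a
   walk of m edges from v to O (in a connected graph this m is < #|T|). *)
Definition dist (v : T) : nat :=
  find (walk_to_depot v) (iota 0 #|T|).

Definition is_tour (t : seq T) : bool :=
  if t is x :: t' then [&& x == O, path e x t' & last x t' == O] else false.

Definition tour_cost (t : seq T) : nat := (size t).-1.

Definition feasible (k : nat) (tours : seq (seq T)) (a : T -> nat) : Prop :=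
  [/\ all is_tour tours,
      (forall v, v != O -> a v < size tours /\ v \in nth [::] tours (a v)) &
      (forall i, i < size tours -> #|[set v | (v != O) && (a v == i)]| <= k)].

Definition sol_cost (tours : seq (seq T)) : nat := \sum_(t <- tours) tour_cost t.

End CVRP.

From mathcomp Require Import all_boot all_order all_algebra zify ring.
Set Implicit Arguments. Unset Strict Implicit. Unset Printing Implicit Defensive.
Import Order.TTheory GRing.Theory Num.Theory.

(* A tour of length L meets the terminals it serves at distinct positions p
   with 0 < p < L, and the terminal at position p has dist at most
   min(p, L - p).  At most L - 2m + 1 positions have min(p, L - p) >= m, so
   removing the two worst positions at a time shows that s distinct positions
   satisfy 4 * sum min(p, L - p) + s^2 <= 2 s L + 1.  As s <= k this scales to
   4 k * sum dist + s k^2 <= 2 k^2 L + s for each tour, and summing over the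
   tours, whose served terminals partition V, gives
   4 k * sum dist + n k^2 <= 2 k^2 opt + n, i.e. the claim. *)

Definition end_dist (L p : nat) := minn p (L - p).

Lemma size_end_dist_ge L m (Q : seq nat) : uniq Q ->
  (forall q, q \in Q -> q <= L /\ m <= end_dist L q) -> size Q <= (L - 2 * m).+1.
Proof.
move=> uQ Qmid; rewrite -(size_iota m (L - 2 * m).+1) uniq_leq_size // => q.
by case/Qmid; rewrite mem_iota /end_dist; lia.
Qed.

Lemma seq_argmin (f : nat -> nat) (s : seq nat) : s != [::] ->
  exists2 x, x \in s & forall y, y \in s -> f x <= f y.
Proof.
case: s => // x0 s _.
have exP : exists m, has (fun x => f x == m) (x0 :: s).
  by exists (f x0); rewrite /= eqxx.
case: (ex_minnP exP) => m /hasP[x xs /eqP fx] minm.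
by exists x => // y ys; rewrite fx minm //; apply/hasP; exists y.
Qed.

Lemma sum_end_dist_le L (P : seq nat) : uniq P -> (forall p, p \in P -> p <= L) ->
  4 * (\sum_(p <- P) end_dist L p) + (size P) ^ 2 <= 2 * size P * L + 1.
Proof.
have [n] := ubnP (size P); elim: n P => // n IHn P ltPn uP lePL.
have [small | big] := ltnP (size P) 2.
  case: P => [|p [|]] // in ltPn uP small lePL *; first by rewrite big_nil.
  by rewrite big_seq1 /end_dist /=; have := lePL p (mem_head _ _); lia.
have Pnil : P != [::] by rewrite -size_eq0 -lt0n ltnW.
have [a aP mina] := seq_argmin (end_dist L) Pnil.
have P1nil : rem a P != [::] by rewrite -size_eq0 size_rem //; case: (size P) big => [|[|]].
have [b bP1 minb] := seq_argmin (end_dist L) P1nil.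
have uP1 : uniq (rem a P) := rem_uniq a uP.
have leP1L p : p \in rem a P -> p <= L by move/mem_rem; apply: lePL.
have leP2L p : p \in rem b (rem a P) -> p <= L by move/mem_rem; apply: leP1L.
have sizeP := size_end_dist_ge uP (fun q qP => conj (lePL q qP) (mina q qP)).
have sizeP1 := size_end_dist_ge uP1 (fun q qP => conj (leP1L q qP) (minb q qP)).
have := IHn (rem b (rem a P)) _ (rem_uniq b uP1) leP2L.
rewrite (perm_big _ (perm_to_rem aP)) big_cons (perm_big _ (perm_to_rem bP1)) big_cons.
move: sizeP sizeP1 (lePL a aP) (leP1L b bP1) ltPn; rewrite !size_rem // /end_dist.
(* 2 end_dist a <= L + 1 - |P| and 2 end_dist b <= L + 2 - |P| give, by
   integrality, end_dist a + end_dist b <= L + 1 - |P|. *)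
case: (size P) big => [|[|s]] //= _; nia.
Qed.

Lemma capacity_scaling k s F L : s <= k -> s <= L.-1 ->
  4 * F + s ^ 2 <= 2 * s * L + 1 -> 4 * k * F + s * k ^ 2 <= 2 * k ^ 2 * L + s.
Proof.
(* The slack is (k - s) (2 k L - s k - 1), which is nonnegative as s < L. *)
move=> /subnK <-; move: (k - s) => d leSL bound.
have [s0 | s_gt0] := posnP s.
  by move: bound; rewrite s0 muln0 mul0n; lia.
have := leq_mul (leqnn (d + s)) bound.
have : d * (s * d + 1) <= d * (2 * d * L) by case: d => // d; rewrite leq_mul2l; nia.
have : s * d * s <= s * d * (2 * L) by rewrite leq_mul2l; lia.
nia.
Qed.

Lemma last_take (T : Type) (x : T) s i :
  i <= size s -> last x (take i s) = nth x (x :: s) i.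
Proof.
elim: s x i => [|y s IHs] x [|i] //= lti.
by rewrite IHs // (set_nth_default x).
Qed.

Lemma last_rev_belast (T : Type) (x : T) p : last (last x p) (rev (belast x p)) = x.
Proof. by case: p => //= y p; rewrite rev_cons last_rcons. Qed.

Section Distance.
Variables (T : finType) (e : rel T) (O : T).
Hypothesis e_sym : symmetric e.

Lemma dist_le_size_walk v p : path e v p -> last v p = O -> dist e O v <= size p.
Proof.
move=> pathp lastp; have walk : walk_to_depot e O v (size p).
  by apply/existsP; exists (in_tuple p); rewrite /= pathp lastp eqxx.
rewrite /dist; have [ltpT | leTp] := ltnP (size p) #|T|; last first.
  by apply: leq_trans (find_size _ _) _; rewrite size_iota.
by rewrite leqNgt; apply/negP => /(before_find 0); rewrite nth_iota // walk.
Qed.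

Lemma dist_last_le_size p : path e O p -> dist e O (last O p) <= size p.
Proof.
move=> pathp; rewrite -(size_belast O) -size_rev.
apply: dist_le_size_walk; last exact: last_rev_belast.
by rewrite rev_path (@eq_path _ _ e) // => x y; rewrite /= e_sym.
Qed.

Lemma dist_nth_closed_walk s i : path e O s -> last O s = O -> i <= size s ->
  dist e O (nth O (O :: s) i) <= minn i (size s - i).
Proof.
move=> paths lasts lei; rewrite -(cat_take_drop i s) cat_path in paths.
case/andP: paths => path_take path_drop; rewrite -last_take // leq_min.
apply/andP; split.
  by rewrite -[leqRHS](size_takel lei) dist_last_le_size.
rewrite -size_drop dist_le_size_walk // -last_cat cat_take_drop //.
Qed.

Lemma index_tour_terminal s v : last O s = O -> v != O -> v \in O :: s ->
  0 < index v (O :: s) < size s.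
Proof.
move=> lasts vO vs.
have idx_le : index v (O :: s) <= size s by have := index_mem v (O :: s); rewrite vs.
have idx_neq0 : index v (O :: s) != 0 by rewrite /= [O == v]eq_sym (negbTE vO).
have idx_neq_size : index v (O :: s) != size s.
  by apply: contra vO => /eqP idx_eq; rewrite -(nth_index O vs) idx_eq -last_nth lasts.
lia.
Qed.

Lemma tour_dist_bound k t (S : {set T}) : is_tour e O t ->
  (forall v, v \in S -> v != O /\ v \in t) -> #|S| <= k ->
  4 * k * (\sum_(v in S) dist e O v) + #|S| * k ^ 2 <= 2 * k ^ 2 * tour_cost t + #|S|.
Proof.
case: t => // x s /and3P[/eqP-> paths /eqP lasts] St leSk; rewrite /tour_cost /=.
have Sidx v : v \in enum S -> 0 < index v (O :: s) < size s.
  by rewrite mem_enum => /St[vO vs]; apply: index_tour_terminal.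
set P := [seq index v (O :: s) | v <- enum S].
have uP : uniq P.
  rewrite map_inj_in_uniq ?enum_uniq // => u v; rewrite !mem_enum.
  by move=> /St[_ us] /St[_ vs] eq_idx; rewrite -(nth_index O us) eq_idx nth_index.
have sizeP : size P = #|S| by rewrite size_map cardE.
have sizeP_le : size P <= (size s).-1.
  rewrite -(size_iota 1 (size s).-1) uniq_leq_size // => _ /mapP[v /Sidx + ->].
  by rewrite mem_iota; lia.
have sum_le : \sum_(v in S) dist e O v <= \sum_(p <- P) end_dist (size s) p.
  rewrite -big_enum big_map !big_seq leq_sum // => v vS.
  have /andP[_ /ltnW le_idx] := Sidx v vS.
  move: vS; rewrite mem_enum => /St[_ vs].
  by rewrite -{1}(nth_index O vs) dist_nth_closed_walk.
have P_le p : p \in P -> p <= size s by case/mapP => v /Sidx + ->; lia.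
apply: leq_trans (_ : 4 * k * (\sum_(p <- P) end_dist (size s) p) + #|S| * k ^ 2 <= _).
  by rewrite leq_add2r leq_mul2l sum_le orbT.
by rewrite -sizeP capacity_scaling ?sum_end_dist_le // sizeP.
Qed.

End Distance.

Lemma sum_partition_index (I : finType) (P : pred I) (F : I -> nat) (a : I -> nat) N :
  (forall v, P v -> a v < N) ->
  \sum_(v | P v) F v = \sum_(i < N) \sum_(v in [set v | P v && (a v == i)]) F v.
Proof.
move=> a_lt; under [RHS]eq_bigr do rewrite big_mkcond.
rewrite exchange_big big_mkcond; apply: eq_bigr => v _ /=; rewrite -big_mkcond /=.
have [Pv | nPv] := boolP (P v); last by rewrite big_pred0 // => i; rewrite inE (negbTE nPv).
under eq_bigl do rewrite inE Pv [a v == _]eq_sym.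
by rewrite (big_ord1_eq _ (fun=> F v)) a_lt.
Qed.

Lemma sol_cost_lower_bound (T : finType) (e : rel T) (O : T) k tours a :
  symmetric e -> feasible e O k tours a ->
  4 * k * (\sum_(v | v != O) dist e O v) + #|T|.-1 * k ^ 2
    <= 2 * k ^ 2 * sol_cost tours + #|T|.-1.
Proof.
move=> e_sym [/(all_nthP [::]) tours_ok covered capacity].
have a_lt v : v != O -> a v < size tours by case/covered.
have card_terminals : #|T|.-1 = \sum_(i < size tours) #|[set v | (v != O) && (a v == i)]|.
  rewrite -(cardC1 O) -sum1_card (sum_partition_index _ a_lt).
  by under eq_bigr do rewrite sum1_card.
have costE : sol_cost tours = \sum_(i < size tours) tour_cost (nth [::] tours i).
  by rewrite /sol_cost (big_nth [::]) big_mkord.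
rewrite card_terminals costE (sum_partition_index _ a_lt) !big_distrr !big_distrl -!big_split.
apply: leq_sum => i _.
apply: (tour_dist_bound e_sym); rewrite ?tours_ok ?capacity // => v.
by rewrite inE => /andP[vO /eqP <-]; split; last case: (covered v vO).
Qed.

Theorem mainTheorem1 (T : finType) (e : rel T) (O : T) (k : nat) :
  simple_graph e -> connected_graph e ->
  (1 <= k <= #|T|.-1)%N ->
  forall (tours : seq (seq T)) (a : T -> nat),
    feasible e O k tours a ->
    ((2%:R / k%:R) * (\sum_(v | v != O) (dist e O v)%:R)
       + (#|T|.-1)%:R / 2%:R - (#|T|.-1)%:R / (2 * k ^ 2)%:R
     <= (sol_cost tours)%:R :> rat)%R.
Proof.
move=> [e_sym _] _ /andP[k_gt0 _] tours a feas.
have := sol_cost_lower_bound e_sym feas; rewrite -natr_sum.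
set D := \sum_(v | v != O) _; set n := #|T|.-1; set C := sol_cost tours => bound.
have k_neq0 : (k%:R != 0 :> rat)%R by rewrite pnatr_eq0 -lt0n.
have -> : (2%:R / k%:R * D%:R + n%:R / 2%:R - n%:R / (2 * k ^ 2)%:R
          = ((4 * k * D + n * k ^ 2)%:R - n%:R) / (2 * k ^ 2)%:R :> rat)%R.
  rewrite !natrD !natrM; field.
  by rewrite k_neq0 -!natrM -natrD pnatr_eq0 andbT -lt0n addn_gt0 muln_gt0 k_gt0.
rewrite ler_pdivrMr ?ltr0n ?muln_gt0 ?expn_gt0 ?k_gt0 //.
by rewrite lerBlDr -natrM -natrD ler_nat [C * _]mulnC.
Qed.
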